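(* Let $\mu,\nu\in\mathcal{P}(\mathcal{X})$, $0<m_1\le m_2<\infty$, $K:\mathcal{X}\times\mathcal{X}\to(0,1]$ measurable with lower decay $l$, and let $(\alpha_1,\tilde\alpha_1)$, $(\alpha_2,\tilde\alpha_2)$ be pairs of tail functions (with $\mu(B_{m_1})>0$, $\nu(B_{m_1})>0$, $\alpha_1,\alpha_2>0$). For $f\in\mathcal{F}^{\mu,norm}_{\alpha_1,\tilde\alpha_1}$, $g\in\mathcal{G}^{\nu,norm}_{\alpha_2,\tilde\alpha_2}$ and $r>0$, \begin{align*} \int L_{K^\top,\nu}(g)f\,d\mu\ge\ &\frac{1+l(r)}{2}-\frac{1-l(r)}{2}\int_{B_r}|f|\,d\mu\int_{B_r}|g|\,d\nu\\ &-\int|f|\,d\mu\int_{B_r^{\mathsf c}}|g|\,d\nu-\int_{B_r^{\mathsf c}}|f|\,d\mu\int_{B_r}|g|\,d\nu, \end{align*} and $\int L_{K^\top,\nu}(g)f\,d\mu\le\int|f|\,d\mu\int|g|\,d\nu$.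
   Context: $\mathcal{X}$ is a Polish space with metric $d_{\mathcal{X}}$, $x_0$ fixed, $B_r=\{x:d_{\mathcal{X}}(x_0,x)\le r\}$, $B_r^{\mathsf c}=\mathcal{X}\setminus B_r$. A non-increasing $l:[0,\infty)\to[0,\infty)$ is a lower decay of $K$ if $\inf_{x,y\in B_r}K(x,y)\ge l(r)$ for all $r>0$. $L_{K^\top,\nu}g(x)=\int K(y,x)g(y)\,\nu(dy)$. A tail function is a non-increasing $\alpha:(0,\infty)\to[0,\infty)$ with $\lim_{r\to\infty}\alpha(r)=0$. For $\rho\in\mathcal{P}(\mathcal{X})$: $\mathcal{F}^{\rho}_{\alpha,\tilde\alpha}$ is the set of $f\in L^2(\rho)$ with $f\mathbf 1_{B_{m_2}}\ge0$ $\rho$-a.s., $\int_{B_r^{\mathsf c}}f_+\,d\rho\le\alpha(r)\int f\,d\rho$ for all $r\ge m_1$, $\int_{B_r^{\mathsf c}}f_-\,d\rho\le\tilde\alpha(r)\int f\,d\rho$ for all $r\ge m_2$; $\mathcal{G}^{\rho}_{\alpha,\tilde\alpha}=\{g\in L^2(\rho):\int fg\,d\rho\ge0\ \forall f\in\mathcal{F}^{\rho}_{\alpha,\tilde\alpha}\}$; superscript $norm$ denotes elements with $\int\cdot\,d\rho=1$. *)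

From HB Require Import structures.
From mathcomp Require Import all_boot all_order all_algebra.
From mathcomp Require Import all_classical all_reals all_analysis.
Set Implicit Arguments. Unset Strict Implicit. Unset Printing Implicit Defensive.
Import Order.TTheory GRing.Theory Num.Theory.
Import numFieldNormedType.Exports.
Local Open Scope classical_set_scope.
Local Open Scope ring_scope.

Definition is_metric (R : realType) (T : Type) (dist : T -> T -> R) :=
  [/\ forall x y, 0 <= dist x y,
      forall x y, dist x y = 0 <-> x = y,
      forall x y, dist x y = dist y x &
      forall x y z, dist x z <= dist x y + dist y z].

Definition dopen (R : realType) (T : Type) (dist : T -> T -> R) (U : set T) :=
  forall x, U x -> exists2 e : R, 0 < e & forall y, dist x y < e -> U y.

Definition dcomplete (R : realType) (T : Type) (dist : T -> T -> R) :=
  forall u : nat -> T,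
    (forall e : R, 0 < e -> exists N, forall n m, (N <= n)%N -> (N <= m)%N ->
        dist (u n) (u m) < e) ->
    exists l, forall e : R, 0 < e -> exists N, forall n, (N <= n)%N -> dist (u n) l < e.

Definition dseparable (R : realType) (T : Type) (dist : T -> T -> R) :=
  exists D : set T, countable D /\
    forall x (e : R), 0 < e -> exists2 y, D y & dist x y < e.

Definition polish_borel (R : realType) (d : measure_display) (T : measurableType d)
  (dist : T -> T -> R) :=
  [/\ is_metric dist, dcomplete dist, dseparable dist &
      (@measurable d T) = <<s [set U | dopen dist U] >>].

Definition Ball (R : realType) (T : Type) (dist : T -> T -> R) (x0 : T) (r : R) : set T :=
  [set x | dist x0 x <= r].

Definition lower_decay (R : realType) (T : Type) (dist : T -> T -> R) (x0 : T)
  (K : T -> T -> R) (l : R -> R) :=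
  [/\ forall r, 0 <= r -> 0 <= l r,
      forall r s, 0 <= r -> r <= s -> l s <= l r &
      forall r, 0 < r -> forall x y, Ball dist x0 r x -> Ball dist x0 r y -> l r <= K x y].

Definition tail_function (R : realType) (a : R -> R) :=
  [/\ forall r, 0 < r -> 0 <= a r,
      forall r s, 0 < r -> r <= s -> a s <= a r &
      a r @[r --> +oo] --> 0].

Section L2.
Context (d : measure_display) (T : measurableType d) (R : realType).

Definition memL2 (rho : {measure set T -> \bar R}) (f : T -> R) :=
  measurable_fun setT f /\ rho.-integrable setT (fun x => ((f x) ^+ 2)%:E).

Definition LKT (nu : {measure set T -> \bar R}) (K : T -> T -> R) (g : T -> R) : T -> R :=
  fun x => Rintegral nu setT (fun y => K y x * g y).

Definition Fset (dist : T -> T -> R) (x0 : T) (m1 m2 : R)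
  (rho : {measure set T -> \bar R}) (a ta : R -> R) (f : T -> R) :=
  [/\ memL2 rho f,
      {ae rho, forall x, Ball dist x0 m2 x -> 0 <= f x},
      forall r, m1 <= r ->
        Rintegral rho (~` Ball dist x0 r) (fun x => Num.max (f x) 0)
          <= a r * Rintegral rho setT f &
      forall r, m2 <= r ->
        Rintegral rho (~` Ball dist x0 r) (fun x => Num.max (- f x) 0)
          <= ta r * Rintegral rho setT f].

Definition Fnorm dist x0 m1 m2 rho a ta f :=
  Fset dist x0 m1 m2 rho a ta f /\ Rintegral rho setT f = 1.

Definition Gset (dist : T -> T -> R) (x0 : T) (m1 m2 : R)
  (rho : {measure set T -> \bar R}) (a ta : R -> R) (g : T -> R) :=
  memL2 rho g /\
  forall f, Fset dist x0 m1 m2 rho a ta f -> 0 <= Rintegral rho setT (fun x => f x * g x).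

Definition Gnorm dist x0 m1 m2 rho a ta g :=
  Gset dist x0 m1 m2 rho a ta g /\ Rintegral rho setT g = 1.
End L2.

(* Write c = (1 + l r) / 2.  Since f and g integrate to 1,
   I - c = \int \int (K y x - c) g(y) f(x) nu(dy) mu(dx).
   On B x B the lower decay gives l r <= K <= 1, hence |K - c| <= (1 - l r) / 2,
   while 0 < K <= 1 gives |K - c| <= 1 everywhere; splitting both integrals
   along B and its complement bounds |I - c|.  The upper bound only uses
   |K| <= 1. *)

From HB Require Import structures.
From mathcomp Require Import all_boot all_order all_algebra.
From mathcomp Require Import all_classical all_reals all_analysis.
From mathcomp Require Import lra measurable_realfun.
Set Implicit Arguments. Unset Strict Implicit. Unset Printing Implicit Defensive.
Import Order.TTheory GRing.Theory Num.Theory.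
Import numFieldNormedType.Exports.
Local Open Scope classical_set_scope.
Local Open Scope ring_scope.

Section bounded_multiplier.
Context (R : realType) (d : measure_display) (T : measurableType d).
Variable mu : {measure set T -> \bar R}.

Lemma Rintegral_norm_setC (u : T -> R) (D : set T) : measurable D ->
  mu.-integrable setT (EFin \o u) ->
  \int[mu]_x `|u x| = \int[mu]_(x in D) `|u x| + \int[mu]_(x in ~` D) `|u x|.
Proof.
move=> mD iu; rewrite -Rintegral_setU ?setUv//.
- exact: measurableC.
- exact: integrable_norm.
- exact/disj_setPCl.
Qed.

Lemma integrable_bounded_mul (h u : T -> R) (M : R) : measurable_fun setT h ->
  (forall y, `|h y| <= M) -> mu.-integrable setT (EFin \o u) ->
  mu.-integrable setT (EFin \o (fun y => h y * u y)).
Proof.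
move=> mh hM iu.
apply: (eq_integrable measurableT ((EFin \o h) \* (EFin \o u))%E) => //.
apply: integrableMr => //; exists M; split; first exact: num_real.
by move=> N MN y _; apply: le_trans (hM y) (ltW MN).
Qed.

Lemma integrable_scale (c : R) (u : T -> R) (D : set T) : measurable D ->
  mu.-integrable D (EFin \o u) -> mu.-integrable D (EFin \o (fun y => c * u y)).
Proof.
move=> mD iu; apply: (eq_integrable mD (fun y => c%:E * (EFin \o u) y)%E).
  by move=> y _; rewrite /= EFinM.
exact: integrableZl.
Qed.

Variables (h u : T -> R).
Hypotheses (mh : measurable_fun setT h) (iu : mu.-integrable setT (EFin \o u)).

Lemma normr_Rintegral_mul_le_split (D : set T) (a b : R) : measurable D ->
  (forall y, D y -> `|h y| <= a) -> (forall y, ~ D y -> `|h y| <= b) ->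
  `|\int[mu]_y (h y * u y)| <=
    a * \int[mu]_(y in D) `|u y| + b * \int[mu]_(y in ~` D) `|u y|.
Proof.
move=> mD hD hC.
have ihu : mu.-integrable setT (EFin \o (fun y => h y * u y)).
  apply: (@integrable_bounded_mul _ _ (Num.max a b)) => // y.
  by have [/hD|/hC] := pselect (D y); move/le_trans; apply; rewrite le_max lexx ?orbT.
have iuN := integrable_norm iu.
have le_on E c : measurable E -> (forall y, E y -> `|h y| <= c) ->
    \int[mu]_(y in E) `|h y * u y| <= c * \int[mu]_(y in E) `|u y|.
  move=> mE hE; rewrite -RintegralZl//; last exact: integrableS iuN.
  apply: le_Rintegral => //.
  - exact: integrableS (integrable_norm ihu).
  - exact: integrable_scale (integrableS _ _ _ iuN).
  - by move=> y Ey; rewrite normrM ler_wpM2r ?hE.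
apply: (le_trans (le_normr_Rintegral _ _)) => //.
rewrite (Rintegral_norm_setC mD ihu) lerD ?le_on//; exact: measurableC.
Qed.

Lemma normr_Rintegral_mul_le (a : R) : (forall y, `|h y| <= a) ->
  `|\int[mu]_y (h y * u y)| <= a * \int[mu]_y `|u y|.
Proof.
move=> ha; rewrite (Rintegral_norm_setC measurableT iu) mulrDr.
exact: normr_Rintegral_mul_le_split.
Qed.

Lemma Rintegral_mulBl (M c : R) : (forall y, `|h y| <= M) ->
  \int[mu]_y ((h y - c) * u y) = \int[mu]_y (h y * u y) - c * \int[mu]_y u y.
Proof.
move=> hM; rewrite -RintegralZl// -RintegralB//.
- by apply: eq_Rintegral => y _; rewrite mulrBl.
- exact: integrable_bounded_mul hM iu.
- exact: integrable_scale.
Qed.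

End bounded_multiplier.

Lemma memL2_integrable (R : realType) (d : measure_display) (T : measurableType d)
  (mu : {finite_measure set T -> \bar R}) (f : T -> R) :
  memL2 mu f -> mu.-integrable setT (EFin \o f).
Proof.
case=> mf if2.
have i1f2 : mu.-integrable setT (EFin \o (fun x => 1 + f x ^+ 2)).
  apply: (@eq_integrable _ _ _ mu setT measurableT ((EFin \o cst 1%R) \+ (fun x => (f x ^+ 2)%:E))%E).
    by move=> x _.
  by apply: integrableD => //; exact: finite_measure_integrable_cst.
apply: le_integrable i1f2 => //; first exact/measurable_EFinP.
move=> x _ /=; rewrite lee_fin [leRHS]ger0_norm ?addr_ge0 ?sqr_ge0//.
rewrite -real_normK ?num_real//; have := normr_ge0 (f x); nra.
Qed.

Section balls.
Context (R : realType) (T : Type) (dist : T -> T -> R) (x0 : T).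
Hypothesis dist_metric : is_metric dist.

Lemma dopen_setC_Ball (r : R) : dopen dist (~` Ball dist x0 r).
Proof.
case: dist_metric => _ _ dsym dtri x /= /negP; rewrite -ltNge => rx.
exists (dist x0 x - r); first by rewrite subr_gt0.
move=> y xy /=; apply/negP; rewrite -ltNge.
have := dtri x0 y x; rewrite (dsym y x); lra.
Qed.

Lemma Ball_center (r : R) : 0 <= r -> Ball dist x0 r x0.
Proof. by case: dist_metric => _ d0 _ _ r0; rewrite /Ball /= (d0 x0 x0).2. Qed.

Lemma lower_decay_ge0_le1 (K : T -> T -> R) (l : R -> R) (r : R) :
  lower_decay dist x0 K l -> (forall x y, K x y <= 1) -> 0 < r -> 0 <= l r <= 1.
Proof.
case=> l_ge0 _ lK K1 r0; rewrite l_ge0 ?(ltW r0)//=.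
have x0B := Ball_center (ltW r0).
by apply: (le_trans _ (K1 x0 x0)); apply: lK.
Qed.

End balls.

Lemma Ball_measurable (R : realType) (d : measure_display) (T : measurableType d)
  (dist : T -> T -> R) (x0 : T) (r : R) :
  polish_borel dist -> measurable (Ball dist x0 r).
Proof.
case=> dm _ _ borel; rewrite -[Ball _ _ _]setCK; apply: measurableC.
by rewrite borel; apply: sub_sigma_algebra; apply: dopen_setC_Ball.
Qed.

Section kernel_operator.
Context (R : realType) (d : measure_display) (T : measurableType d).
Variable nu : {measure set T -> \bar R}.
Variables (K : T -> T -> R) (g : T -> R).
Hypotheses (mK : measurable_fun setT (fun p : T * T => K p.1 p.2))
  (K_ge0 : forall x y, 0 <= K x y) (K_le1 : forall x y, K x y <= 1)
  (ig : nu.-integrable setT (EFin \o g)).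

Lemma measurable_kernel_section (x : T) : measurable_fun setT (K^~ x).
Proof. exact: measurableT_comp mK (pair2_measurable x). Qed.

Lemma normr_LKT_le (x : T) : `|LKT nu K g x| <= \int[nu]_y `|g y|.
Proof.
rewrite -[leRHS]mul1r; apply: normr_Rintegral_mul_le => //.
- exact: measurable_kernel_section.
- by move=> y; rewrite ger0_norm.
Qed.

Lemma LKT_sub_normr_le_split (D : set T) (x : T) (lam : R) : measurable D ->
  0 <= lam <= 1 -> (forall y, D y -> lam <= K y x) ->
  `|LKT nu K g x - (1 + lam) / 2 * \int[nu]_y g y| <=
    (1 - lam) / 2 * \int[nu]_(y in D) `|g y| + \int[nu]_(y in ~` D) `|g y|.
Proof.
move=> mD /andP[lam0 lam1] lamK.
have mKx := measurable_kernel_section x.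
rewrite /LKT -(Rintegral_mulBl mKx ig (M := 1)); last by move=> y; rewrite ger0_norm.
rewrite -[\int[nu]_(y in ~` D) `|g y|]mul1r.
apply: (normr_Rintegral_mul_le_split (h := fun y => K y x - _)) => //.
- exact: measurable_funB.
- move=> y /lamK lamKy; have := K_le1 y x.
  by rewrite ler_norml => Kle1; apply/andP; split; lra.
- move=> y _; have := K_le1 y x; have := K_ge0 y x.
  by rewrite ler_norml => Kge0 Kle1; apply/andP; split; lra.
Qed.

Lemma LKT_sub_normr_le (x : T) (lam : R) : 0 <= lam <= 1 ->
  `|LKT nu K g x - (1 + lam) / 2 * \int[nu]_y g y| <= \int[nu]_y `|g y|.
Proof.
move=> lam01; have := LKT_sub_normr_le_split (x := x) measurable0 lam01 (fun _ => False_ind _).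
by rewrite Rintegral_set0 mulr0 add0r setC0.
Qed.

End kernel_operator.

(* [LKT] is the difference of the Tonelli integrals of the positive and
   negative parts of [(x, y) |-> K y x * g y]. *)
Lemma LKT_measurable (R : realType) (d : measure_display) (T : measurableType d)
  (nu : {sigma_finite_measure set T -> \bar R}) (K : T -> T -> R) (g : T -> R) :
  measurable_fun setT (fun p : T * T => K p.1 p.2) -> measurable_fun setT g ->
  measurable_fun setT (LKT nu K g).
Proof.
move=> mK mg; pose k (p : T * T) := (K p.2 p.1 * g p.2)%:E.
have mk : measurable_fun setT k.
  apply/measurable_EFinP/measurable_funM.
    exact: measurableT_comp mK (@measurable_swap _ _ T T).
  exact: measurableT_comp mg (@measurable_snd _ _ T T).
have -> : LKT nu K g = fun x => fine (fubini_F nu k^\+ x - fubini_F nu k^\- x)%E.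
  apply/funext => x; rewrite /LKT /Rintegral integralE /fubini_F.
  by congr (fine (_ - _)); apply: eq_integral => y _; rewrite !(funeposE, funenegE).
apply: measurableT_comp => //; apply: emeasurable_funB.
- exact: measurable_fun_fubini_tonelli_F (measurable_funepos mk) (fun _ => funepos_ge0 _ _).
- exact: measurable_fun_fubini_tonelli_F (measurable_funeneg mk) (fun _ => funeneg_ge0 _ _).
Qed.

Section kernel_pairing.
Context (R : realType) (d : measure_display) (T : measurableType d).
Variables (mu : {measure set T -> \bar R}) (nu : {sigma_finite_measure set T -> \bar R}).
Variables (K : T -> T -> R) (f g : T -> R).
Hypotheses (mK : measurable_fun setT (fun p : T * T => K p.1 p.2))
  (K_ge0 : forall x y, 0 <= K x y) (K_le1 : forall x y, K x y <= 1)
  (iff : mu.-integrable setT (EFin \o f)) (ig : nu.-integrable setT (EFin \o g)).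

Let mLKT : measurable_fun setT (LKT nu K g).
Proof.
apply: LKT_measurable mK _.
by case/integrableP: ig => /measurable_EFinP.
Qed.

Lemma normr_Rintegral_LKT_le :
  `|\int[mu]_x (LKT nu K g x * f x)| <= \int[mu]_x `|f x| * \int[nu]_y `|g y|.
Proof.
by rewrite mulrC; apply: normr_Rintegral_mul_le => // x; apply: normr_LKT_le.
Qed.

Lemma Rintegral_LKT_sub_normr_le (D : set T) (lam : R) : measurable D ->
  0 <= lam <= 1 -> (forall x y, D x -> D y -> lam <= K y x) ->
  `|\int[mu]_x (LKT nu K g x * f x) - (1 + lam) / 2 * \int[nu]_y g y * \int[mu]_x f x|
    <= ((1 - lam) / 2 * \int[nu]_(y in D) `|g y| + \int[nu]_(y in ~` D) `|g y|)
         * \int[mu]_(x in D) `|f x|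
       + \int[nu]_y `|g y| * \int[mu]_(x in ~` D) `|f x|.
Proof.
move=> mD lam01 lamK.
rewrite -(Rintegral_mulBl mLKT iff (M := \int[nu]_y `|g y|)); last first.
  by move=> x; apply: normr_LKT_le.
apply: (normr_Rintegral_mul_le_split (h := fun x => LKT nu K g x - _)) => //.
- exact: measurable_funB.
- by move=> x Dx; apply: LKT_sub_normr_le_split => // y; apply: lamK.
- by move=> x _; apply: LKT_sub_normr_le.
Qed.

End kernel_pairing.

Theorem lemma4p4 (R : realType) (d : measure_display) (T : measurableType d)
  (dist : T -> T -> R) (x0 : T) (mu nu : probability T R) (m1 m2 : R)
  (K : T -> T -> R) (l : R -> R) (a1 ta1 a2 ta2 : R -> R) (f g : T -> R) (r : R) :
  polish_borel dist ->
  0 < m1 -> m1 <= m2 ->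
  measurable_fun setT (fun p : T * T => K p.1 p.2) ->
  (forall x y, 0 < K x y /\ K x y <= 1) ->
  lower_decay dist x0 K l ->
  tail_function a1 -> tail_function ta1 -> tail_function a2 -> tail_function ta2 ->
  (0 < mu (Ball dist x0 m1))%E -> (0 < nu (Ball dist x0 m1))%E ->
  (forall s, 0 < s -> 0 < a1 s) -> (forall s, 0 < s -> 0 < a2 s) ->
  Fnorm dist x0 m1 m2 mu a1 ta1 f ->
  Gnorm dist x0 m1 m2 nu a2 ta2 g ->
  0 < r ->
  let B := Ball dist x0 r in
  let I := Rintegral mu setT (fun x => LKT nu K g x * f x) in
  (1 + l r) / 2
    - (1 - l r) / 2 * Rintegral mu B (fun x => `|f x|) * Rintegral nu B (fun y => `|g y|)
    - Rintegral mu setT (fun x => `|f x|) * Rintegral nu (~` B) (fun y => `|g y|)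
    - Rintegral mu (~` B) (fun x => `|f x|) * Rintegral nu B (fun y => `|g y|)
  <= I
  /\ I <= Rintegral mu setT (fun x => `|f x|) * Rintegral nu setT (fun y => `|g y|).
Proof.
move=> pb _ _ mK K01 ld _ _ _ _ _ _ _ _ [[f2 _ _ _] f1] [[g2 _] g1] r0 B I.
have K_ge0 x y : 0 <= K x y by exact: ltW (K01 x y).1.
have K_le1 x y : K x y <= 1 by exact: (K01 x y).2.
have iff := memL2_integrable f2; have ig := memL2_integrable g2.
have mB : measurable B := Ball_measurable x0 r pb.
have lr01 : 0 <= l r <= 1 by case: pb => dm _ _ _; exact: lower_decay_ge0_le1 ld K_le1 r0.
have lK x y : B x -> B y -> l r <= K y x by case: ld => _ _ lK Bx By; exact: lK.
have := Rintegral_LKT_sub_normr_le mK K_ge0 K_le1 iff ig mB lr01 lK.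
have := normr_Rintegral_LKT_le mK K_ge0 K_le1 iff ig.
rewrite -/I f1 g1 !mulr1 (Rintegral_norm_setC mB iff) (Rintegral_norm_setC mB ig).
rewrite !ler_norml => /andP[_ up] /andP[low _]; split; nra.
Qed.
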